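(* For every process $Q$ there exist $k\ge 0$, processes $P_1,\ldots,P_k$, prefixes $\alpha_1,\ldots,\alpha_k$, a sequence of names $\vec c$, and sequences of names $\vec a_1,\ldots,\vec a_k$ (where $\vec c$ and each $\vec a_i$ may be empty) such that $$Q \equiv (\nu \vec c)\big((\vec a_1)\alpha_1.P_1 \mid (\vec a_2)\alpha_2.P_2 \mid \cdots \mid (\vec a_k)\alpha_k.P_k\big).$$
   Context: Let $\mathcal N$ be a countable set of names, ranged over by $a,b,c,x,y,z$. Processes are generated by $P,Q ::= 0 \mid P\mid Q \mid (\nu a)P \mid (a)P \mid \alpha.P$, where $(\nu a)P$ is name restriction (binding $a$), $(a)P$ is the authorization scope (meaning $P$ is authorized to act on channel $a$; here $a$ is not bound), and prefixes are $\alpha ::= \overline{a}\langle b\rangle$ (output of $b$ on $a$) $\mid a(x)$ (input on $a$, binding $x$ in the continuation) $\mid \overline{a}\langle\!\langle b\rangle\!\rangle$ (send the authorization for $b$ on $a$) $\mid a\langle\!\langle b\rangle\!\rangle$ (receive the authorization for $b$ on $a$; $b$ is not bound). $(\nu\vec c)P$ abbreviates $(\nu c_1)\cdots(\nu c_m)P$ and $(\vec a)P$ abbreviates $(a_1)\cdots(a_m)P$. Free names: $\mathrm{fn}(0)=\emptyset$, $\mathrm{fn}(P\mid Q)=\mathrm{fn}(P)\cup\mathrm{fn}(Q)$, $\mathrm{fn}((\nu a)P)=\mathrm{fn}(P)\setminus\{a\}$, $\mathrm{fn}((a)P)=\{a\}\cup\mathrm{fn}(P)$, $\mathrm{fn}(\overline{a}\langle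 b\rangle.P)=\mathrm{fn}(\overline{a}\langle\!\langle b\rangle\!\rangle.P)=\mathrm{fn}(a\langle\!\langle b\rangle\!\rangle.P)=\{a,b\}\cup\mathrm{fn}(P)$, $\mathrm{fn}(a(x).P)=\{a\}\cup(\mathrm{fn}(P)\setminus\{x\})$. Structural congruence $\equiv$ is the least congruence on processes satisfying: $P\mid 0\equiv P$; $P\mid Q\equiv Q\mid P$; $(P\mid Q)\mid R\equiv P\mid(Q\mid R)$; $(\nu a)0\equiv 0$; $(\nu a)(\nu b)P\equiv(\nu b)(\nu a)P$; $P\mid(\nu a)Q\equiv(\nu a)(P\mid Q)$ if $a\notin\mathrm{fn}(P)$; $P\equiv Q$ whenever $P$ and $Q$ are $\alpha$-convertible (renaming of bound names); $(a)(b)P\equiv(b)(a)P$; $(a)0\equiv 0$; $(a)(P\mid Q)\equiv(a)P\mid(a)Q$; $(a)(\nu b)P\equiv(\nu b)(a)P$ if $a\neq b$. An empty parallel composition ($k=0$) is read as $0$. *)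

From Stdlib Require Import List Arith.
Import ListNotations.

Definition name := nat.

Inductive prefix : Type :=
| POut  (a b : name)   (* a<b>        : output of b on a *)
| PIn   (a x : name)   (* a(x)        : input on a, binds x *)
| PAOut (a b : name)   (* a<<b>> bar  : send authorization for b on a *)
| PAIn  (a b : name).  (* a<<b>>      : receive authorization for b on a *)

Inductive proc : Type :=
| Nil  : proc
| Par  : proc -> proc -> proc
| Res  : name -> proc -> proc
| Auth : name -> proc -> proc      (* (a)P, does not bind a *)
| Pre  : prefix -> proc -> proc.

Fixpoint fn (P : proc) (n : name) : Prop :=
  match P with
  | Nil => False
  | Par P1 P2 => fn P1 n \/ fn P2 n
  | Res a P1 => fn P1 n /\ n <> a
  | Auth a P1 => n = a \/ fn P1 n
  | Pre (POut a b) P1 | Pre (PAOut a b) P1 | Pre (PAIn a b) P1 =>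
      n = a \/ n = b \/ fn P1 n
  | Pre (PIn a x) P1 => n = a \/ (fn P1 n /\ n <> x)
  end.

Definition swapn (a b n : name) : name :=
  if Nat.eqb n a then b else if Nat.eqb n b then a else n.

Definition swap_pre (a b : name) (p : prefix) : prefix :=
  match p with
  | POut c d => POut (swapn a b c) (swapn a b d)
  | PIn c x => PIn (swapn a b c) (swapn a b x)
  | PAOut c d => PAOut (swapn a b c) (swapn a b d)
  | PAIn c d => PAIn (swapn a b c) (swapn a b d)
  end.

Fixpoint swap (a b : name) (P : proc) : proc :=
  match P with
  | Nil => Nil
  | Par P1 P2 => Par (swap a b P1) (swap a b P2)
  | Res c P1 => Res (swapn a b c) (swap a b P1)
  | Auth c P1 => Auth (swapn a b c) (swap a b P1)
  | Pre p P1 => Pre (swap_pre a b p) (swap a b P1)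
  end.

(* Structural congruence: least congruence containing the listed axioms.
   Alpha-conversion is generated (under congruence closure) by renaming
   a single binder to a fresh name via swapping. *)
Inductive scong : proc -> proc -> Prop :=
| sc_refl P : scong P P
| sc_sym P Q : scong P Q -> scong Q P
| sc_trans P Q R : scong P Q -> scong Q R -> scong P R
| sc_par_l P P' Q : scong P P' -> scong (Par P Q) (Par P' Q)
| sc_par_r P Q Q' : scong Q Q' -> scong (Par P Q) (Par P Q')
| sc_res a P P' : scong P P' -> scong (Res a P) (Res a P')
| sc_auth a P P' : scong P P' -> scong (Auth a P) (Auth a P')
| sc_pre p P P' : scong P P' -> scong (Pre p P) (Pre p P')
| sc_par_nil P : scong (Par P Nil) P
| sc_par_comm P Q : scong (Par P Q) (Par Q P)
| sc_par_assoc P Q R : scong (Par (Par P Q) R) (Par P (Par Q R))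
| sc_res_nil a : scong (Res a Nil) Nil
| sc_res_comm a b P : scong (Res a (Res b P)) (Res b (Res a P))
| sc_scope_ext a P Q : ~ fn P a -> scong (Par P (Res a Q)) (Res a (Par P Q))
| sc_alpha_res a b P : ~ fn P b -> scong (Res a P) (Res b (swap a b P))
| sc_alpha_in c x y P : ~ fn P y ->
    scong (Pre (PIn c x) P) (Pre (PIn c y) (swap x y P))
| sc_auth_comm a b P : scong (Auth a (Auth b P)) (Auth b (Auth a P))
| sc_auth_nil a : scong (Auth a Nil) Nil
| sc_auth_par a P Q : scong (Auth a (Par P Q)) (Par (Auth a P) (Auth a Q))
| sc_auth_res a b P : a <> b -> scong (Auth a (Res b P)) (Res b (Auth a P)).

Definition res_list (cs : list name) (P : proc) : proc := fold_right Res P cs.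
Definition auth_list (as_ : list name) (P : proc) : proc := fold_right Auth P as_.

Fixpoint par_list (l : list proc) : proc :=
  match l with
  | [] => Nil
  | [P] => P
  | P :: l' => Par P (par_list l')
  end.

(* Restrictions float outwards by scope extrusion,
   after alpha-renaming them apart from everything in the other parallel
   component; authorizations distribute over parallel composition and commute
   with restrictions whose names differ from them, so they sink down onto the
   prefixed components. *)
From Stdlib Require Import List Arith Lia.
Import ListNotations.

Definition component (t : list name * prefix * proc) : proc :=
  match t with (as_, al, P) => auth_list as_ (Pre al P) end.

Definition normal_form (cs : list name) (l : list (list name * prefix * proc)) : proc :=
  res_list cs (par_list (map component l)).

Definition is_normal_form (Q : proc) : Prop :=
  exists cs l, scong Q (normal_form cs l).

Definition prefix_names (p : prefix) : list name :=
  match p with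
  | POut a b | PIn a b | PAOut a b | PAIn a b => [a; b]
  end.

Fixpoint names (P : proc) : list name :=
  match P with
  | Nil => []
  | Par P1 P2 => names P1 ++ names P2
  | Res a P1 | Auth a P1 => a :: names P1
  | Pre p P1 => prefix_names p ++ names P1
  end.

Lemma fn_in_names P n : fn P n -> In n (names P).
Proof.
  induction P as [| P1 IH1 P2 IH2 | a P IH | a P IH | p P IH]; simpl.
  - tauto.
  - intros H; apply in_or_app; tauto.
  - intros [H _]; right; auto.
  - intros [H | H]; [left | right]; auto.
  - destruct p; simpl; intuition.
Qed.

Lemma res_list_names cs P c : In c cs -> In c (names (res_list cs P)).
Proof. induction cs; simpl; intuition. Qed.

Definition fresh (l : list name) : name := S (fold_right max 0 l).

Lemma fresh_notin l : ~ In (fresh l) l.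
Proof.
  assert (Hgt : forall n, In n l -> n < fresh l).
  { unfold fresh; induction l as [| m l IH]; simpl; [tauto |].
    intros n [<- | Hn]; [lia | specialize (IH n Hn); lia]. }
  intros H; apply Hgt in H; lia.
Qed.

Lemma swapn_involutive a b n : swapn a b (swapn a b n) = n.
Proof.
  unfold swapn.
  destruct (Nat.eqb_spec n a), (Nat.eqb_spec n b);
  repeat match goal with |- context [Nat.eqb ?x ?y] => destruct (Nat.eqb_spec x y) end;
  subst; lia.
Qed.

Lemma swapn_eq_iff a b n m : n = swapn a b m <-> swapn a b n = m.
Proof. split; intros H; subst; now rewrite swapn_involutive. Qed.

Lemma fn_swap a b P n : fn (swap a b P) n <-> fn P (swapn a b n).
Proof.
  revert n; induction P as [| P1 IH1 P2 IH2 | c P IH | c P IH | p P IH]; intros n; simpl.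
  - tauto.
  - rewrite IH1, IH2; tauto.
  - rewrite IH, swapn_eq_iff; tauto.
  - rewrite IH, swapn_eq_iff; tauto.
  - destruct p; simpl; rewrite IH, ?(swapn_eq_iff a b n); tauto.
Qed.

Lemma fn_swap_fresh a b P n : ~ fn P b ->
  (fn (swap a b P) n /\ n <> b <-> fn P n /\ n <> a).
Proof.
  intros Hb; rewrite fn_swap; unfold swapn.
  destruct (Nat.eqb_spec n a), (Nat.eqb_spec n b); subst; intuition.
Qed.

Definition swap_component (a b : name) (t : list name * prefix * proc) :=
  match t with (as_, al, P) => (map (swapn a b) as_, swap_pre a b al, swap a b P) end.

Lemma swap_res_list a b cs P :
  swap a b (res_list cs P) = res_list (map (swapn a b) cs) (swap a b P).
Proof. induction cs; simpl; congruence. Qed.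

Lemma swap_auth_list a b as_ P :
  swap a b (auth_list as_ P) = auth_list (map (swapn a b) as_) (swap a b P).
Proof. induction as_; simpl; congruence. Qed.

Lemma swap_par_list a b l : swap a b (par_list l) = par_list (map (swap a b) l).
Proof.
  induction l as [| P [| Q l] IH]; simpl in *; congruence.
Qed.

Lemma swap_normal_form a b cs l :
  swap a b (normal_form cs l)
  = normal_form (map (swapn a b) cs) (map (swap_component a b) l).
Proof.
  unfold normal_form; rewrite swap_res_list, swap_par_list, !map_map.
  do 2 f_equal; apply map_ext; intros [[as_ al] P]; apply swap_auth_list.
Qed.

Lemma res_list_scong cs P P' : scong P P' -> scong (res_list cs P) (res_list cs P').
Proof. induction cs; simpl; auto using sc_res. Qed.

Lemma res_list_app cs ds P : res_list (cs ++ ds) P = res_list cs (res_list ds P).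
Proof. apply fold_right_app. Qed.

Lemma scope_ext_list_r cs P Q : (forall c, In c cs -> ~ fn P c) ->
  scong (Par P (res_list cs Q)) (res_list cs (Par P Q)).
Proof.
  induction cs as [| c cs IH]; simpl; intros H.
  - apply sc_refl.
  - eapply sc_trans; [apply sc_scope_ext; auto |].
    apply sc_res, IH; auto.
Qed.

Lemma scope_ext_list_l cs P Q : (forall c, In c cs -> ~ fn Q c) ->
  scong (Par (res_list cs P) Q) (res_list cs (Par P Q)).
Proof.
  intros H; eapply sc_trans; [apply sc_par_comm |].
  eapply sc_trans; [apply scope_ext_list_r, H |].
  apply res_list_scong, sc_par_comm.
Qed.

Lemma par_list_cons P l : scong (par_list (P :: l)) (Par P (par_list l)).
Proof. destruct l; simpl; [apply sc_sym, sc_par_nil | apply sc_refl]. Qed.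

Lemma par_list_app l1 l2 :
  scong (Par (par_list l1) (par_list l2)) (par_list (l1 ++ l2)).
Proof.
  induction l1 as [| P l1 IH]; simpl.
  - eapply sc_trans; [apply sc_par_comm | apply sc_par_nil].
  - eapply sc_trans; [apply sc_par_l, par_list_cons |].
    eapply sc_trans; [apply sc_par_assoc |].
    eapply sc_trans; [apply sc_par_r, IH |].
    apply sc_sym, par_list_cons.
Qed.

Lemma auth_par_list a l : scong (Auth a (par_list l)) (par_list (map (Auth a) l)).
Proof.
  induction l as [| P l IH]; simpl.
  - apply sc_auth_nil.
  - eapply sc_trans; [apply sc_auth, par_list_cons |].
    eapply sc_trans; [apply sc_auth_par |].
    eapply sc_trans; [apply sc_par_r, IH |].
    apply sc_sym, (par_list_cons (Auth a P)).
Qed.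

Lemma auth_res_list a cs P : ~ In a cs ->
  scong (Auth a (res_list cs P)) (res_list cs (Auth a P)).
Proof.
  induction cs as [| c cs IH]; simpl; intros H.
  - apply sc_refl.
  - eapply sc_trans; [apply sc_auth_res; intros ->; auto |].
    apply sc_res, IH; tauto.
Qed.

(* Free names must be tracked explicitly: structural congruence does not
   preserve them, e.g. [fn (Auth a Nil) a] but not [fn Nil a]. *)
Lemma normal_form_rename_apart cs l A : exists cs' l',
  scong (normal_form cs l) (normal_form cs' l')
  /\ (forall n, fn (normal_form cs' l') n -> fn (normal_form cs l) n)
  /\ forall c, In c cs' -> ~ In c A.
Proof.
  induction cs as [| c cs IH].
  - exists [], l; split; [apply sc_refl | simpl; tauto].
  - destruct IH as (cs0 & l0 & Hcong & Hfn & Hapart).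
    set (R := normal_form cs0 l0).
    set (c' := fresh (names R ++ A)).
    assert (Hc' : ~ In c' (names R ++ A)) by apply fresh_notin.
    assert (HcR : ~ fn R c').
    { intros H; apply Hc', in_or_app; left; apply fn_in_names, H. }
    exists (c' :: map (swapn c c') cs0), (map (swap_component c c') l0).
    change (normal_form (c' :: ?cs') ?l') with (Res c' (normal_form cs' l')).
    change (normal_form (c :: cs) l) with (Res c (normal_form cs l)).
    rewrite <- swap_normal_form; fold R; split; [| split].
    + eapply sc_trans; [apply sc_res, Hcong | apply sc_alpha_res, HcR].
    + intros n; simpl; rewrite fn_swap_fresh by exact HcR.
      intros [HR Hn]; split; [apply Hfn, HR | exact Hn].
    + intros d [<- | Hd]; [intros H; apply Hc', in_or_app; right; exact H |].
      apply in_map_iff in Hd as (e & <- & He).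
      assert (HeR : In e (names R)) by apply res_list_names, He.
      unfold swapn; destruct (Nat.eqb_spec e c), (Nat.eqb_spec e c'); subst.
      * intros H; apply Hc', in_or_app; right; exact H.
      * intros H; apply Hc', in_or_app; right; exact H.
      * exfalso; apply Hc', in_or_app; left; exact HeR.
      * apply Hapart, He.
Qed.

Lemma normal_form_par Q1 Q2 :
  is_normal_form Q1 -> is_normal_form Q2 -> is_normal_form (Par Q1 Q2).
Proof.
  intros (cs1 & l1 & H1) (cs2 & l2 & H2).
  destruct (normal_form_rename_apart cs1 l1 (names (normal_form cs2 l2)))
    as (cs1' & l1' & Hr1 & _ & Hapart1).
  destruct (normal_form_rename_apart cs2 l2 (names (par_list (map component l1'))))
    as (cs2' & l2' & Hr2 & Hfn2 & Hapart2).
  exists (cs1' ++ cs2'), (l1' ++ l2').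
  eapply sc_trans; [apply sc_par_l, (sc_trans _ _ _ H1 Hr1) |].
  eapply sc_trans; [apply sc_par_r, (sc_trans _ _ _ H2 Hr2) |].
  unfold normal_form at 1 2.
  eapply sc_trans; [apply scope_ext_list_l |].
  { intros c Hc Hfn; apply (Hapart1 c Hc), fn_in_names.
    apply Hfn2, Hfn. }
  eapply sc_trans; [apply res_list_scong, scope_ext_list_r |].
  { intros c Hc Hfn; apply (Hapart2 c Hc), fn_in_names, Hfn. }
  unfold normal_form; rewrite res_list_app, map_app.
  apply res_list_scong, res_list_scong, par_list_app.
Qed.

Lemma normal_form_res a Q : is_normal_form Q -> is_normal_form (Res a Q).
Proof.
  intros (cs & l & H); exists (a :: cs), l; apply sc_res, H.
Qed.

Lemma normal_form_auth a Q : is_normal_form Q -> is_normal_form (Auth a Q).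
Proof.
  intros (cs & l & H).
  destruct (normal_form_rename_apart cs l [a]) as (cs' & l' & Hr & _ & Hapart).
  exists cs', (map (fun '(as_, al, P) => (a :: as_, al, P)) l').
  eapply sc_trans; [apply sc_auth, (sc_trans _ _ _ H Hr) |].
  unfold normal_form.
  eapply sc_trans; [apply auth_res_list; intros Ha; apply (Hapart a Ha); left; auto |].
  apply res_list_scong.
  eapply sc_trans; [apply auth_par_list |].
  rewrite !map_map; erewrite map_ext; [apply sc_refl |].
  intros [[as_ al] P]; reflexivity.
Qed.

Lemma every_proc_is_normal_form Q : is_normal_form Q.
Proof.
  induction Q as [| Q1 IH1 Q2 IH2 | a Q IH | a Q IH | p Q IH].
  - exists [], []; apply sc_refl.
  - now apply normal_form_par.
  - now apply normal_form_res.
  - now apply normal_form_auth.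
  - exists [], [([], p, Q)]; apply sc_refl.
Qed.

Theorem mainTheorem1 :
  forall Q : proc,
  exists (cs : list name) (comps : list (list name * prefix * proc)),
    scong Q
      (res_list cs
        (par_list (map (fun t => match t with
                                 | (as_, al, P) => auth_list as_ (Pre al P)
                                 end) comps))).
Proof. intros Q; exact (every_proc_is_normal_form Q). Qed.
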